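(* Let $x\in\mathbb{R}^d$ with $\|x\|_2=1$, let $\ket{x}=\sum_{i\in[d]}x_i\ket{i}$, and let $\delta>0$. Consider the following procedure, given access to a unitary $U:\ket{0}\mapsto\ket{x}$, its controlled version, and QRAM: (1) measure $N=\frac{36\ln d}{\delta^2}$ copies of $\ket{x}$ in the standard basis, let $n_i$ be the number of times outcome $i$ is observed, and store $\sqrt{p_i}=\sqrt{n_i/N}$ in QRAM; (2) create $N$ copies of the state $\frac{1}{\sqrt2}\ket{0}\sum_{i}x_i\ket{i}+\frac{1}{\sqrt2}\ket{1}\sum_i\sqrt{p_i}\ket{i}$; (3) apply a Hadamard gate to the first qubit of each copy, giving $\frac12\sum_i\big((x_i+\sqrt{p_i})\ket{0,i}+(x_i-\sqrt{p_i})\ket{1,i}\big)$; (4) measure both registers of each copy in the standard basis and let $n(0,i)$ be the number of times outcome $(0,i)$ is observed; (5) set $\sigma(i)=+1$ if $n(0,i)>0.4Np_i$ and $\sigma(i)=-1$ otherwise; (6) output the vector $\widetilde{X}$ with $\widetilde{X}_i=\sigma(i)\sqrt{p_i}$. Then, with probability at least $1-\frac{1}{d^{0.83}}$, $\|\widetilde{X}-x\|_\infty<(1+\sqrt2)\delta$.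
   Context: $\ket{i}$ denotes the standard basis vectors; $\|\cdot\|_\infty$ is the maximum absolute value of the coordinates; $\ln$ is the natural logarithm. *)

From HB Require Import structures.
From mathcomp Require Import all_boot all_order all_algebra.
From mathcomp Require Import reals exp.
Set Implicit Arguments. Unset Strict Implicit. Unset Printing Implicit Defensive.
Import Order.TTheory GRing.Theory Num.Theory.
Local Open Scope ring_scope.

Section Tomography.
Variables (R : realType) (d N : nat).

Definition norm2 (v : 'I_d -> R) : R := Num.sqrt (\sum_i v i ^+ 2).
Definition norminf (v : 'I_d -> R) : R := \big[Num.max/0]_i `|v i|.

(* Step (1): N standard-basis measurements of |x>, outcome i w.p. x_i^2. *)
Definition count1 (s : {ffun 'I_N -> 'I_d}) (i : 'I_d) : nat :=
  #|[set k | s k == i]|.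
Definition phat (s : {ffun 'I_N -> 'I_d}) (i : 'I_d) : R :=
  (count1 s i)%:R / N%:R.
Definition prob1 (x : 'I_d -> R) (s : {ffun 'I_N -> 'I_d}) : R :=
  \prod_k x (s k) ^+ 2.

(* Steps (2)-(4): outcome (b,i), b = false for first-qubit value 0,
   has probability ((x_i + sqrt p_i)/2)^2 if b = 0 and
   ((x_i - sqrt p_i)/2)^2 if b = 1. *)
Definition outcome2 (x p : 'I_d -> R) (o : bool * 'I_d) : R :=
  ((x o.2 + (if o.1 then -1 else 1) * Num.sqrt (p o.2)) / 2) ^+ 2.
Definition prob2 (x p : 'I_d -> R) (t : {ffun 'I_N -> bool * 'I_d}) : R :=
  \prod_k outcome2 x p (t k).
Definition count0 (t : {ffun 'I_N -> bool * 'I_d}) (i : 'I_d) : nat :=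
  #|[set k | t k == (false, i)]|.

Definition sigma (p : 'I_d -> R) (t : {ffun 'I_N -> bool * 'I_d}) (i : 'I_d) : R :=
  if (count0 t i)%:R > 4 / 10 * N%:R * p i then 1 else -1.
Definition Xtilde (p : 'I_d -> R) (t : {ffun 'I_N -> bool * 'I_d}) (i : 'I_d) : R :=
  sigma p t i * Num.sqrt (p i).

Definition success_prob (x : 'I_d -> R) (P : ('I_d -> R) -> bool) : R :=
  \sum_(s : {ffun 'I_N -> 'I_d})
    \sum_(t : {ffun 'I_N -> bool * 'I_d} | P (Xtilde (phat s) t))
      prob1 x s * prob2 x (phat s) t.
End Tomography.

Definition num_copies (R : realType) (d : nat) (delta : R) : nat :=
  `|Num.ceil (36 * ln (d%:R : R) / delta ^+ 2)|%N.

(* Both rounds count how many of N independent outcomes fall in a set A of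
   weight q, and every tail event is bounded by the exponential-moment
   (Chernoff) inequality: if lam (n_A - m) >= 0 on the event, its probability
   is at most (1 + q (e^lam - 1))^N e^(-lam m) <= exp (N q (e^lam - 1) - lam m).

   For q = a^2 the choices lam = e / (a + e) and lam = ln ((a - e) / a) show
   that sqrt (n_A / N) is within e of a except with probability
   2 exp (-N e^2), whatever a is.  With e = delta / 3 and N >= 36 ln d / delta^2,
   step (1) gives |sqrt p_i - |x_i|| <= delta / 3 for all i except with
   probability 2 d exp (-N delta^2 / 9) <= 2 d^-3.

   Given such p, a correct sign makes |X~_i - x_i| <= delta / 3 and a wrong one
   costs sqrt p_i + |x_i|, so an error (1 + sqrt 2) delta forces a wrong sign
   together with sqrt p_i + |x_i| >= (1 + sqrt 2) delta.  Then the mean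
   N ((x_i + sqrt p_i) / 2)^2 of n(0,i) lies far from the threshold
   0.4 N p_i, on the side opposite to the wrong decision: below N delta^2 / 36
   if x_i <= 0, above it by a constant factor if x_i > 0.  Chernoff with
   lam = ln 2, resp. lam = ln (18/25), bounds each coordinate's failure by
   d^-4.  The total failure probability 3 d^-3 is below d^-0.83 for d >= 2. *)

From HB Require Import structures.
From mathcomp Require Import all_boot all_order all_algebra.
From mathcomp Require Import reals sequences exp.
From mathcomp Require Import ring lra.
Set Implicit Arguments. Unset Strict Implicit. Unset Printing Implicit Defensive.
Import Order.TTheory GRing.Theory Num.Theory.
Local Open Scope ring_scope.

Lemma ler_sum_pred (R : numDomainType) (T : finType) (P Q : pred T) (F : T -> R) :
  (forall t, 0 <= F t) -> (forall t, P t -> Q t) ->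
  \sum_(t | P t) F t <= \sum_(t | Q t) F t.
Proof.
move=> F_ge0 PQ; rewrite [leLHS]big_mkcond [leRHS]big_mkcond /=.
apply: ler_sum => t _; case Pt: (P t); first by rewrite PQ.
by case: (Q t).
Qed.

Lemma union_bound (R : numDomainType) (I T : finType) (B : I -> pred T)
    (P : pred T) (F : T -> R) :
  (forall t, 0 <= F t) -> (forall t, P t -> exists i, B i t) ->
  \sum_(t | P t) F t <= \sum_i \sum_(t | B i t) F t.
Proof.
move=> F_ge0 PB; rewrite (exchange_big_dep xpredT) //= [leLHS]big_mkcond /=.
apply: ler_sum => t _; case Pt: (P t); last exact: sumr_ge0.
have [i Bi] := PB t Pt.
by rewrite (bigD1 i) //= lerDl sumr_ge0.
Qed.

Lemma sum_ffun_prod (R : comNzRingType) (O : finType) (N : nat) (w : O -> R) :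
  \sum_(t : {ffun 'I_N -> O}) \prod_k w (t k) = (\sum_o w o) ^+ N.
Proof.
have := bigA_distr_bigA (fun (_ : 'I_N) o => w o); rewrite /= => <-.
by rewrite prodr_const card_ord.
Qed.

Lemma two_stage_lower_bound (R : realFieldType) (S T : finType) (mu : S -> R)
    (nu : S -> T -> R) (G : pred S) (P : S -> pred T) (e1 e2 : R) :
  (forall s, 0 <= mu s) -> (forall s t, 0 <= nu s t) ->
  \sum_s mu s = 1 -> (forall s, \sum_t nu s t = 1) ->
  \sum_(s | ~~ G s) mu s <= e1 -> 0 <= e2 ->
  (forall s, G s -> \sum_(t | ~~ P s t) nu s t <= e2) ->
  1 - e1 - e2 <= \sum_s \sum_(t | P s t) mu s * nu s t.
Proof.
move=> mu_ge0 nu_ge0 mu_sum1 nu_sum1 badG e2_ge0 badP.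
have inner s : 1 - e2 - (~~ G s)%:R <= \sum_(t | P s t) nu s t.
  have := nu_sum1 s; rewrite (bigID (P s)) /=.
  have : 0 <= \sum_(t | P s t) nu s t by exact: sumr_ge0.
  have : 0 <= \sum_(t | ~~ P s t) nu s t by exact: sumr_ge0.
  case Gs: (G s) => /=; last by lra.
  have := badP s Gs; lra.
apply: le_trans (_ : \sum_s mu s * (1 - e2 - (~~ G s)%:R) <= _).
  rewrite (eq_bigr (fun s => mu s * (1 - e2) - mu s * (~~ G s)%:R)); last first.
    by move=> s _; ring.
  rewrite sumrB -mulr_suml mu_sum1 mul1r.
  rewrite (eq_bigr (fun s => if ~~ G s then mu s else 0)); last first.
    by move=> s _; case: (G s); rewrite /= ?mulr1 ?mulr0.
  by rewrite -big_mkcond /=; lra.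
by apply: ler_sum => s _; rewrite -mulr_sumr ler_wpM2l.
Qed.

Lemma ln_ge1BV (R : realType) (b : R) : 0 < b -> 1 - b^-1 <= ln b.
Proof.
move=> b_gt0; have := expR_ge1Dx (- ln b).
by rewrite expRN lnK ?posrE //; lra.
Qed.

Definition hits (O : finType) (N : nat) (A : pred O) (t : {ffun 'I_N -> O}) : nat :=
  #|[set k | A (t k)]|.

Section Chernoff.
Variables (R : realType) (O : finType) (N : nat) (w : O -> R).
Hypotheses (w_ge0 : forall o, 0 <= w o) (w_sum1 : \sum_o w o = 1).
Local Notation sample := {ffun 'I_N -> O}.

Lemma expR_hits (A : pred O) (lam : R) (t : sample) :
  expR (lam * (hits A t)%:R) = \prod_k expR (lam * (A (t k))%:R).
Proof.
rewrite -expR_sum -mulr_sumr -natr_sum /hits -sum1_card big_mkcond /=.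
by congr (expR (_ * _%:R)); apply: eq_bigr => k _; rewrite inE; case: (A (t k)).
Qed.

Lemma chernoff_bound (A : pred O) (P : pred sample) (lam m : R) :
  (forall t, P t -> lam * m <= lam * (hits A t)%:R) ->
  \sum_(t | P t) \prod_k w (t k) <=
    expR (N%:R * ((\sum_(o | A o) w o) * (expR lam - 1)) - lam * m).
Proof.
move=> P_dev; pose g o := w o * expR (lam * (A o)%:R).
have g_ge0 o : 0 <= g o by rewrite mulr_ge0 ?expR_ge0.
have tilted t : P t -> \prod_k w (t k) <= (\prod_k g (t k)) * expR (- (lam * m)).
  move=> Pt; rewrite /g big_split /= -expR_hits -mulrA -expRD.
  rewrite ler_peMr ?prodr_ge0 // (le_trans _ (expR_ge1Dx _)) // lerDl subr_ge0.
  exact: P_dev.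
have mean : \sum_o g o = 1 + (\sum_(o | A o) w o) * (expR lam - 1).
  rewrite -[in X in X + _]w_sum1 [X in _ + X * _]big_mkcond mulr_suml -big_split /=.
  by apply: eq_bigr => o _; rewrite /g; case: (A o); rewrite /= ?mulr1 ?mulr0 ?expR0; ring.
apply: (@le_trans _ _ (\sum_(t | P t) (\prod_k g (t k)) * expR (- (lam * m)))).
  exact: ler_sum.
apply: (@le_trans _ _ (\sum_(t : sample) (\prod_k g (t k)) * expR (- (lam * m)))).
  by apply: ler_sum_pred => // t; rewrite mulr_ge0 ?expR_ge0 ?prodr_ge0.
rewrite -mulr_suml sum_ffun_prod mean expRD ler_wpM2r ?expR_ge0 // expRM_natl.
by apply: lerXn2r; rewrite ?nnegrE ?expR_ge0 ?expR_ge1Dx // -mean sumr_ge0.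
Qed.

Lemma chernoff_upper_tail (A : pred O) (lam m : R) : 0 <= lam ->
  \sum_(t : sample | m <= (hits A t)%:R) \prod_k w (t k) <=
    expR (N%:R * ((\sum_(o | A o) w o) * (expR lam - 1)) - lam * m).
Proof. by move=> lam_ge0; apply: chernoff_bound => t; apply: ler_wpM2l. Qed.

Lemma chernoff_lower_tail (A : pred O) (lam m : R) : lam <= 0 ->
  \sum_(t : sample | (hits A t)%:R <= m) \prod_k w (t k) <=
    expR (N%:R * ((\sum_(o | A o) w o) * (expR lam - 1)) - lam * m).
Proof. by move=> lam_le0; apply: chernoff_bound => t; apply: ler_wnM2l. Qed.

Lemma sqrt_freq_upper_tail (A : pred O) (a e : R) :
  0 <= a -> 0 < e -> \sum_(o | A o) w o = a ^+ 2 ->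
  \sum_(t : sample | N%:R * (a + e) ^+ 2 <= (hits A t)%:R) \prod_k w (t k) <=
    expR (- (N%:R * e ^+ 2)).
Proof.
move=> a_ge0 e_gt0 qA; have ae_gt0 : 0 < a + e by lra.
apply: le_trans (@chernoff_upper_tail A (e / (a + e)) _ _) _.
  by rewrite divr_ge0 ?ltW.
rewrite ler_expR qA.
have mgf : a ^+ 2 * (expR (e / (a + e)) - 1) <= a * e.
  have [a_gt0|a_le0] := ltP 0 a; last first.
    have -> : a = 0 by lra.
    by rewrite expr2 !mul0r.
  have : e / (a + e) <= ln ((a + e) / a).
    have -> : e / (a + e) = 1 - ((a + e) / a)^-1 by rewrite invf_div; field; lra.
    by rewrite ln_ge1BV ?divr_gt0.
  rewrite -ler_expR lnK ?posrE ?divr_gt0 // => expR_le.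
  apply: (@le_trans _ _ (a ^+ 2 * ((a + e) / a - 1))).
    by rewrite ler_wpM2l ?sqr_ge0 // lerD2r.
  by have -> : a ^+ 2 * ((a + e) / a - 1) = a * e by field; lra.
have := ler_wpM2l (ler0n R N) mgf.
have -> : e / (a + e) * (N%:R * (a + e) ^+ 2) = N%:R * (e * (a + e)) by field; lra.
lra.
Qed.

Lemma sqrt_freq_lower_tail (A : pred O) (a e : R) :
  0 < e -> e < a -> \sum_(o | A o) w o = a ^+ 2 ->
  \sum_(t : sample | (hits A t)%:R <= N%:R * (a - e) ^+ 2) \prod_k w (t k) <=
    expR (- (N%:R * e ^+ 2)).
Proof.
move=> e_gt0 ea qA; set b := (a - e) / a.
have b_gt0 : 0 < b by rewrite divr_gt0; lra.
apply: le_trans (@chernoff_lower_tail A (ln b) _ _) _.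
  by rewrite ln_le0 // ler_pdivrMr; lra.
rewrite ler_expR qA lnK ?posrE //.
have lnb : - ln b <= e / (a - e).
  have := ln_ge1BV b_gt0; rewrite /b invf_div.
  have -> : 1 - a / (a - e) = - (e / (a - e)) by field; lra.
  lra.
have := ler_wpM2r (mulr_ge0 (ler0n R N) (sqr_ge0 (a - e))) lnb.
have -> : e / (a - e) * (N%:R * (a - e) ^+ 2) = N%:R * (e * (a - e)) by field; lra.
have -> : a ^+ 2 * (b - 1) = - (a * e) by rewrite /b; field; lra.
lra.
Qed.

Lemma sqrt_freq_concentration (A : pred O) (a e : R) :
  (0 < N)%N -> 0 <= a -> 0 < e -> \sum_(o | A o) w o = a ^+ 2 ->
  \sum_(t : sample | e < `|Num.sqrt ((hits A t)%:R / N%:R) - a|) \prod_k w (t k) <=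
    2 * expR (- (N%:R * e ^+ 2)).
Proof.
move=> N_gt0 a_ge0 e_gt0 qA; have N_pos : 0 < N%:R :> R by rewrite ltr0n.
pose upper (t : sample) := N%:R * (a + e) ^+ 2 <= (hits A t)%:R.
pose lower (t : sample) := ((hits A t)%:R <= N%:R * (a - e) ^+ 2) && (e < a).
apply: le_trans (union_bound (B := fun b : bool => if b then upper else lower) _ _) _.
- by move=> t; rewrite prodr_ge0.
- move=> t; set r := Num.sqrt _; have r_ge0 : 0 <= r := sqrtr_ge0 _.
  have hitsE : (hits A t)%:R = N%:R * r ^+ 2.
    by rewrite sqr_sqrtr ?divr_ge0 // mulrC divfK // gt_eqF.
  rewrite ltr_normr => /orP [dev|dev]; [exists true | exists false];
    rewrite /= /upper /lower hitsE ler_pM2l //; first by nra.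
  by apply/andP; split; nra.
rewrite big_bool /=.
have upper_le := sqrt_freq_upper_tail (A := A) a_ge0 e_gt0 qA.
suff : \sum_(t | lower t) \prod_k w (t k) <= expR (- (N%:R * e ^+ 2)) by lra.
have [ea|ae] := ltP e a; last first.
  by rewrite big_pred0 ?expR_ge0 // => t; rewrite /lower ltNge ae andbF.
apply: le_trans (sqrt_freq_lower_tail (A := A) e_gt0 ea qA).
by apply: ler_sum_pred => [t|t /andP[]//]; rewrite prodr_ge0.
Qed.

End Chernoff.

Lemma sqrt2_gt (R : rcfType) : 1414 / 1000 < Num.sqrt (2 : R).
Proof.
have -> : 1414 / 1000 = Num.sqrt ((1414 / 1000) ^+ 2 : R).
  by rewrite sqrtr_sqr ger0_norm // divr_ge0.
by rewrite ltr_sqrt //; lra.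
Qed.

Lemma third_lt_1Dsqrt2M (R : rcfType) (delta : R) :
  0 < delta -> delta / 3 < (1 + Num.sqrt 2) * delta.
Proof.
move=> delta_gt0; have : 0 <= Num.sqrt 2 * delta by rewrite mulr_ge0 ?sqrtr_ge0 ?ltW.
rewrite mulrDl mul1r; lra.
Qed.

Lemma large_error_wrong_sign (R : realDomainType) (x s e c : R) :
  0 <= s -> `|s - `|x| | <= e -> e < c -> c <= `|s - x| -> x < 0 /\ c <= s - x.
Proof.
move=> s_ge0 close ec err; have [x_ge0|x_lt0] := leP 0 x.
  by move: close; rewrite (ger0_norm x_ge0); lra.
by move: err; rewrite ger0_norm; lra.
Qed.

Lemma large_error_wrong_signN (R : realDomainType) (x s e c : R) :
  0 <= s -> `|s - `|x| | <= e -> e < c -> c <= `|- s - x| -> 0 < x /\ c <= s + x.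
Proof.
move=> s_ge0 close ec err.
have close' : `|s - `|- x| | <= e by rewrite normrN.
have err' : c <= `|s - - x| by rewrite opprK -normrN opprD.
by have [] := large_error_wrong_sign s_ge0 close' ec err'; rewrite oppr_lt0 opprK.
Qed.

Lemma upper_tail_exponent (R : rcfType) (x s delta : R) :
  0 < delta -> (1 + Num.sqrt 2) * delta <= s - x -> `|s + x| <= delta / 3 ->
  ((x + s) / 2) ^+ 2 - 1 / 2 * (4 / 10 * s ^+ 2) <= - (delta ^+ 2 / 9).
Proof.
move=> delta_gt0 far; rewrite ler_norml => /andP [lo hi].
have {far} far : 2414 / 1000 * delta <= s - x by have := sqrt2_gt R; nra.
have s_ge : 104 / 100 * delta <= s by lra.
have sx_sq : (s + x) ^+ 2 <= (delta / 3) ^+ 2 by nra.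
have s_sq : (104 / 100 * delta) ^+ 2 <= s ^+ 2 by nra.
nra.
Qed.

Lemma lower_tail_exponent (R : rcfType) (x s delta : R) :
  0 < delta -> (1 + Num.sqrt 2) * delta <= s + x -> `|s - x| <= delta / 3 ->
  ((x + s) / 2) ^+ 2 * (18 / 25 - 1) + 7 / 18 * (4 / 10 * s ^+ 2) <= - (delta ^+ 2 / 9).
Proof.
move=> delta_gt0 far; rewrite ler_norml => /andP [lo hi].
have {far} far : 2414 / 1000 * delta <= s + x by have := sqrt2_gt R; nra.
have s_sq : s ^+ 2 <= ((s + x + delta / 3) / 2) ^+ 2 by nra.
have far_sq : 0 <= (s + x - 2414 / 1000 * delta) ^+ 2 := sqr_ge0 _.
have far_lin : 0 <= (s + x - 2414 / 1000 * delta) * delta by nra.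
nra.
Qed.

Lemma three_mul_expR_le_powR (R : realType) (D : R) :
  2 <= D -> 3 * D * expR (- (4 * ln D)) <= 1 / D `^ (83 / 100).
Proof.
move=> D_ge2; set L := ln D.
have DE : D = expR L by rewrite lnK // posrE; lra.
have L_ge0 : 0 <= L by rewrite ln_ge0 //; lra.
have -> : 1 / D `^ (83 / 100) = expR (- (3 * L)) * expR (217 / 100 * L).
  rewrite /powR gt_eqF /=; last lra.
  by rewrite div1r -expRN -expRD -/L; congr expR; lra.
have -> : 3 * D * expR (- (4 * L)) = 3 * expR (- (3 * L)).
  by rewrite {1}DE -mulrA -expRD; congr (_ * expR _); lra.
have : 4 <= expR (217 / 100 * L).
  apply: le_trans (_ : expR (2%:R * L) <= _); last by rewrite ler_expR; lra.
  by rewrite expRM_natl -DE; nra.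
have := expR_gt0 (- (3 * L)); nra.
Qed.

Lemma sum_sqr_norm2 (R : realType) (d : nat) (x : 'I_d -> R) :
  norm2 x = 1 -> \sum_j x j ^+ 2 = 1.
Proof.
have sum_ge0 : 0 <= \sum_j x j ^+ 2 by apply: sumr_ge0 => j _; exact: sqr_ge0.
by rewrite /norm2 -{2}(sqr_sqrtr sum_ge0) => ->; rewrite expr1n.
Qed.

Lemma num_copies_ge (R : realType) (d : nat) (delta : R) :
  0 < delta -> 36 * ln (d%:R : R) <= (num_copies d delta)%:R * delta ^+ 2.
Proof.
move=> delta_gt0; rewrite -ler_pdivrMr ?exprn_gt0 // /num_copies natr_absz.
by apply: le_trans (ceil_ge _) _; rewrite ler_int ler_norm.
Qed.

Lemma sum_count1 (d N : nat) (s : {ffun 'I_N -> 'I_d}) : (\sum_i count1 s i)%N = N.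
Proof.
rewrite -[RHS]card_ord -sum1_card (partition_big s xpredT) //=.
by apply: eq_bigr => i _; rewrite /count1 -sum1_card; apply: eq_bigl => k; rewrite inE.
Qed.

Lemma phat_ge0 (R : realType) (d N : nat) (s : {ffun 'I_N -> 'I_d}) i : 0 <= phat R s i.
Proof. by rewrite divr_ge0. Qed.

Lemma sum_phat (R : realType) (d N : nat) (s : {ffun 'I_N -> 'I_d}) :
  (0 < N)%N -> \sum_i phat R s i = 1.
Proof.
move=> N_gt0; rewrite -mulr_suml -natr_sum sum_count1 divff //.
by rewrite pnatr_eq0 -lt0n.
Qed.

Lemma sum_prob1 (R : realType) (d N : nat) (x : 'I_d -> R) :
  \sum_j x j ^+ 2 = 1 -> \sum_(s : {ffun 'I_N -> 'I_d}) prob1 x s = 1.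
Proof. by move=> x_sum1; rewrite -(expr1n _ N) -x_sum1 -sum_ffun_prod. Qed.

Lemma outcome2_ge0 (R : realType) (d : nat) (x p : 'I_d -> R) o : 0 <= outcome2 x p o.
Proof. exact: sqr_ge0. Qed.

Lemma sum_outcome2 (R : realType) (d : nat) (x p : 'I_d -> R) :
  (forall j, 0 <= p j) -> \sum_j p j = 1 -> \sum_j x j ^+ 2 = 1 ->
  \sum_o outcome2 x p o = 1.
Proof.
move=> p_ge0 p_sum1 x_sum1.
have -> : \sum_o outcome2 x p o = \sum_b \sum_j outcome2 x p (b, j).
  by rewrite pair_bigA; apply: eq_bigr => -[].
rewrite big_bool -big_split /=.
rewrite (eq_bigr (fun j => (x j ^+ 2 + p j) / 2)); last first.
  move=> j _; rewrite /outcome2 /=.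
  have := sqr_sqrtr (p_ge0 j); set s := Num.sqrt (p j) => <-.
  by field.
by rewrite -mulr_suml big_split /= x_sum1 p_sum1; field.
Qed.

Lemma sum_prob2 (R : realType) (d N : nat) (x p : 'I_d -> R) :
  (forall j, 0 <= p j) -> \sum_j p j = 1 -> \sum_j x j ^+ 2 = 1 ->
  \sum_(t : {ffun 'I_N -> bool * 'I_d}) prob2 x p t = 1.
Proof. by move=> *; rewrite /prob2 sum_ffun_prod sum_outcome2 ?expr1n. Qed.

Lemma success_prob_ge0 (R : realType) (d N : nat) (x : 'I_d -> R) P :
  0 <= success_prob N x P.
Proof.
apply: sumr_ge0 => s _; apply: sumr_ge0 => t _.
by rewrite mulr_ge0 // prodr_ge0 // => k _; [exact: sqr_ge0 | exact: outcome2_ge0].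
Qed.

Lemma Xtilde_signE (R : realType) (d N : nat) (p : 'I_d -> R)
    (t : {ffun 'I_N -> bool * 'I_d}) (i : 'I_d) :
  Xtilde p t i = if 4 / 10 * N%:R * p i < (count0 t i)%:R then Num.sqrt (p i)
                 else - Num.sqrt (p i).
Proof. by rewrite /Xtilde /sigma; case: ifP; rewrite ?mul1r ?mulN1r. Qed.

Lemma outcome2_zeroE (R : realType) (d : nat) (x p : 'I_d -> R) (i : 'I_d) :
  \sum_(o | o == (false, i)) outcome2 x p o = ((x i + Num.sqrt (p i)) / 2) ^+ 2.
Proof. by rewrite big_pred1_eq /outcome2 /= mul1r. Qed.

Lemma phat_concentration (R : realType) (d N : nat) (x : 'I_d -> R) (e : R) (i : 'I_d) :
  (0 < N)%N -> 0 < e -> \sum_j x j ^+ 2 = 1 ->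
  \sum_(s : {ffun 'I_N -> 'I_d} | e < `|Num.sqrt (phat R s i) - `|x i| |) prob1 x s <=
    2 * expR (- (N%:R * e ^+ 2)).
Proof.
move=> N_gt0 e_gt0 x_sum1; rewrite /prob1 /phat /count1.
apply: (@sqrt_freq_concentration R _ N (fun j => x j ^+ 2) _ _ (pred1 i)) => //.
- by move=> j; exact: sqr_ge0.
- by rewrite big_pred1_eq real_normK ?num_real.
Qed.

Lemma phat_far (R : realType) (d N : nat) (x : 'I_d -> R) (delta : R) :
  (0 < N)%N -> 0 < delta -> \sum_j x j ^+ 2 = 1 ->
  \sum_(s : {ffun 'I_N -> 'I_d} |
      ~~ [forall i, `|Num.sqrt (phat R s i) - `|x i| | <= delta / 3]) prob1 x s <=
    d%:R * (2 * expR (- (N%:R * delta ^+ 2 / 9))).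
Proof.
move=> N_gt0 delta_gt0 x_sum1.
apply: le_trans (union_bound
  (B := fun i s => delta / 3 < `|Num.sqrt (phat R s i) - `|x i| |) _ _) _.
- by move=> s; rewrite prodr_ge0 // => k _; exact: sqr_ge0.
- by move=> s /forallPn [i]; rewrite -ltNge; exists i.
rewrite (mulr_natl _ d) -[X in _ <= _ *+ X](card_ord d) -sumr_const.
apply: ler_sum => i _.
have -> : N%:R * delta ^+ 2 / 9 = N%:R * (delta / 3) ^+ 2 by field.
by apply: phat_concentration; rewrite ?divr_gt0.
Qed.

Lemma coord_error_nonpos (R : realType) (d N : nat) (x p : 'I_d -> R) (delta : R)
    (i : 'I_d) :
  0 < delta -> (forall j, 0 <= p j) -> \sum_j p j = 1 -> \sum_j x j ^+ 2 = 1 ->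
  `|Num.sqrt (p i) - `|x i| | <= delta / 3 -> x i <= 0 ->
  \sum_(t : {ffun 'I_N -> bool * 'I_d} | (1 + Num.sqrt 2) * delta <= `|Xtilde p t i - x i|)
    prob2 x p t <= expR (- (N%:R * delta ^+ 2 / 9)).
Proof.
move=> delta_gt0 p_ge0 p_sum1 x_sum1 close x_le0.
set s := Num.sqrt (p i); set m := 4 / 10 * N%:R * p i; set c := _ * delta.
have s_ge0 : 0 <= s := sqrtr_ge0 _.
have m_ge0 : 0 <= m by rewrite !mulr_ge0 ?invr_ge0.
have third_lt_c := third_lt_1Dsqrt2M delta_gt0.
have wrong_plus (t : {ffun 'I_N -> bool * 'I_d}) : c <= `|Xtilde p t i - x i| ->
    m <= (count0 t i)%:R /\ c <= s - x i.
  rewrite Xtilde_signE; case: ifP => [count_gt|_] err.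
    have [_ far] := large_error_wrong_sign s_ge0 close third_lt_c err.
    by split; first exact: ltW.
  by have [] := large_error_wrong_signN s_ge0 close third_lt_c err; lra.
have [far|near] := leP c (s - x i); last first.
  by rewrite big_pred0 ?expR_ge0 // => t; apply/negP => /wrong_plus []; lra.
rewrite /prob2; apply: le_trans (ler_sum_pred (Q := fun t => m <= (count0 t i)%:R) _ _) _.
- by move=> t; rewrite prodr_ge0 // => k _; exact: outcome2_ge0.
- by move=> t /wrong_plus [].
have w_sum1 := sum_outcome2 p_ge0 p_sum1 x_sum1.
apply: le_trans (@chernoff_upper_tail _ _ N _ (outcome2_ge0 x p) w_sum1
  (fun o => o == (false, i)) (ln 2) m _) _.
  by rewrite ln_ge0 //; lra.
rewrite outcome2_zeroE -/s ler_expR lnK ?posrE //.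
have mE : m = N%:R * (4 / 10 * s ^+ 2) by rewrite /m sqr_sqrtr //; ring.
have ln2_ge : 1 / 2 <= ln (2 : R) by have := @ln_ge1BV R 2; lra.
have := ler_wpM2r m_ge0 ln2_ge.
have close' : `|s + x i| <= delta / 3 by move: close; rewrite (ler0_norm x_le0) opprK.
have := ler_wpM2l (ler0n R N) (upper_tail_exponent delta_gt0 far close').
rewrite mE; lra.
Qed.

Lemma coord_error_pos (R : realType) (d N : nat) (x p : 'I_d -> R) (delta : R)
    (i : 'I_d) :
  0 < delta -> (forall j, 0 <= p j) -> \sum_j p j = 1 -> \sum_j x j ^+ 2 = 1 ->
  `|Num.sqrt (p i) - `|x i| | <= delta / 3 -> 0 < x i ->
  \sum_(t : {ffun 'I_N -> bool * 'I_d} | (1 + Num.sqrt 2) * delta <= `|Xtilde p t i - x i|)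
    prob2 x p t <= expR (- (N%:R * delta ^+ 2 / 9)).
Proof.
move=> delta_gt0 p_ge0 p_sum1 x_sum1 close x_gt0.
set s := Num.sqrt (p i); set m := 4 / 10 * N%:R * p i; set c := _ * delta.
have s_ge0 : 0 <= s := sqrtr_ge0 _.
have m_ge0 : 0 <= m by rewrite !mulr_ge0 ?invr_ge0.
have third_lt_c := third_lt_1Dsqrt2M delta_gt0.
have wrong_minus (t : {ffun 'I_N -> bool * 'I_d}) : c <= `|Xtilde p t i - x i| ->
    (count0 t i)%:R <= m /\ c <= s + x i.
  rewrite Xtilde_signE; case: ifP => [_|count_le] err.
    by have [] := large_error_wrong_sign s_ge0 close third_lt_c err; lra.
  have [_ far] := large_error_wrong_signN s_ge0 close third_lt_c err.
  by rewrite leNgt count_le.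
have [far|near] := leP c (s + x i); last first.
  by rewrite big_pred0 ?expR_ge0 // => t; apply/negP => /wrong_minus []; lra.
rewrite /prob2; apply: le_trans (ler_sum_pred (Q := fun t => (count0 t i)%:R <= m) _ _) _.
- by move=> t; rewrite prodr_ge0 // => k _; exact: outcome2_ge0.
- by move=> t /wrong_minus [].
have w_sum1 := sum_outcome2 p_ge0 p_sum1 x_sum1.
set b : R := 18 / 25; have b_gt0 : 0 < b by rewrite /b; lra.
apply: le_trans (@chernoff_lower_tail _ _ N _ (outcome2_ge0 x p) w_sum1
  (fun o => o == (false, i)) (ln b) m _) _.
  by rewrite ln_le0 // /b; lra.
rewrite outcome2_zeroE -/s ler_expR lnK ?posrE //.
have mE : m = N%:R * (4 / 10 * s ^+ 2) by rewrite /m sqr_sqrtr //; ring.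
have lnb_ge : - (7 / 18) <= ln b by have := ln_ge1BV b_gt0; rewrite /b; lra.
have := ler_wpM2r m_ge0 lnb_ge.
have close' : `|s - x i| <= delta / 3 by move: close; rewrite (gtr0_norm x_gt0).
have := ler_wpM2l (ler0n R N) (lower_tail_exponent delta_gt0 far close').
rewrite mE /b; lra.
Qed.

Lemma coord_error (R : realType) (d N : nat) (x p : 'I_d -> R) (delta : R)
    (i : 'I_d) :
  0 < delta -> (forall j, 0 <= p j) -> \sum_j p j = 1 -> \sum_j x j ^+ 2 = 1 ->
  `|Num.sqrt (p i) - `|x i| | <= delta / 3 ->
  \sum_(t : {ffun 'I_N -> bool * 'I_d} | (1 + Num.sqrt 2) * delta <= `|Xtilde p t i - x i|)
    prob2 x p t <= expR (- (N%:R * delta ^+ 2 / 9)).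
Proof.
move=> delta_gt0 p_ge0 p_sum1 x_sum1 close.
by have [x_le0|x_gt0] := leP (x i) 0; [apply: coord_error_nonpos | apply: coord_error_pos].
Qed.

Lemma norminf_lt (R : realType) (d : nat) (v : 'I_d -> R) (c : R) :
  0 < c -> (forall i, `|v i| < c) -> norminf v < c.
Proof.
move=> c_gt0 v_lt; rewrite /norminf; elim/big_ind: _ => // a b a_lt b_lt.
by rewrite gt_max a_lt b_lt.
Qed.

Lemma output_error (R : realType) (d N : nat) (x p : 'I_d -> R) (delta : R) :
  0 < delta -> (forall j, 0 <= p j) -> \sum_j p j = 1 -> \sum_j x j ^+ 2 = 1 ->
  (forall i, `|Num.sqrt (p i) - `|x i| | <= delta / 3) ->
  \sum_(t : {ffun 'I_N -> bool * 'I_d} |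
      ~~ (norminf (fun i => Xtilde p t i - x i) < (1 + Num.sqrt 2) * delta))
    prob2 x p t <= d%:R * expR (- (N%:R * delta ^+ 2 / 9)).
Proof.
move=> delta_gt0 p_ge0 p_sum1 x_sum1 close.
have c_gt0 : 0 < (1 + Num.sqrt 2) * delta by rewrite mulr_gt0 ?ltr_wpDr ?sqrtr_ge0.
apply: le_trans (union_bound
  (B := fun i t => (1 + Num.sqrt 2) * delta <= `|Xtilde p t i - x i|) _ _) _.
- by move=> t; rewrite prodr_ge0 // => k _; exact: outcome2_ge0.
- move=> t far; apply/existsP; apply: contraNT far => /existsPn near.
  by apply: norminf_lt => // i; rewrite ltNge near.
rewrite (mulr_natl _ d) -[X in _ <= _ *+ X](card_ord d) -sumr_const.
by apply: ler_sum => i _; exact: coord_error.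
Qed.

Theorem theorem9 (R : realType) (d : nat) (x : 'I_d -> R) (delta : R)
  (hx : norm2 x = 1) (hdelta : 0 < delta) :
  success_prob (num_copies d delta) x
    (fun X => norminf (fun i => X i - x i) < (1 + Num.sqrt 2) * delta)
  >= 1 - 1 / ((d%:R : R) `^ (83 / 100)).
Proof.
have x_sum1 := sum_sqr_norm2 hx.
case: d x hx x_sum1 => [|[|d]] x _ x_sum1.
- by move: x_sum1; rewrite big_ord0 => /eqP; rewrite eq_sym oner_eq0.
- by rewrite powR1 divr1 subrr success_prob_ge0.
set D := d.+2; set N := num_copies D delta; set E := expR (- (N%:R * delta ^+ 2 / 9)).
have D_ge2 : 2 <= D%:R :> R by rewrite ler_nat.
have lnD_gt0 : 0 < ln (D%:R : R) by rewrite ln_gt0 //; lra.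
have N_copies : 36 * ln (D%:R : R) <= N%:R * delta ^+ 2 := num_copies_ge D hdelta.
have N_gt0 : (0 < N)%N.
  by rewrite lt0n; apply/eqP => N0; move: N_copies; rewrite N0 mul0r; lra.
have E_le : E <= expR (- (4 * ln (D%:R : R))) by rewrite ler_expR; lra.
apply: le_trans (two_stage_lower_bound (e1 := D%:R * (2 * E)) (e2 := D%:R * E)
  (G := fun s => [forall i, `|Num.sqrt (phat R s i) - `|x i| | <= delta / 3]) _ _ _ _ _ _ _).
- have := three_mul_expR_le_powR D_ge2; have := ler_wpM2l (ler0n R D) E_le; lra.
- by move=> s; rewrite prodr_ge0 // => k _; exact: sqr_ge0.
- by move=> s t; rewrite prodr_ge0 // => k _; exact: outcome2_ge0.
- exact: sum_prob1.
- by move=> s; rewrite sum_prob2 // ?sum_phat // => j; exact: phat_ge0.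
- exact: phat_far.
- by rewrite mulr_ge0 ?expR_ge0.
by move=> s /forallP close; rewrite output_error // ?sum_phat // => j; exact: phat_ge0.
Qed.
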